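(* Let $\Omega$ be finite, $M$ finite, and $s$ a proper scoring rule on the set $\mathcal P$ of probability functions on $\Omega$, with values in $[-\infty,M]^\Omega$. Let $H=\{p\in\hat{\mathcal P}: s(p)\text{ is finite}\}$ and let $\bar H$ be its closure. For any $p\in\bar H$, the limit of $\langle q,s(q)\rangle$ as $q$ tends to $p$ within $H$ exists (in $[-\infty,M]$). If $s(p)$ is finite, this limit equals $\langle p,s(p)\rangle$. Finally, if $(p_n)$ is a sequence in $H$ converging to $p\in\bar H$ such that $\lim_n s(p_n)=r$, then $\langle p,r\rangle=\lim_n\langle p_n,s(p_n)\rangle$.
   Context: $\hat{\mathcal P}$ is the set of functions $q:\Omega\to[0,1]$ with $\sum_\omega q(\omega)=1$, identified with probabilities via $q(\omega)=p(\{\omega\})$, with the Euclidean topology; $s(q)$ for $q\in\hat{\mathcal P}$ means $s$ of the corresponding probability. $[-\infty,M]^\Omega$ has the product of extended-real topologies. $\langle f,g\rangle=\sum_\omega f(\omega)\cdot g(\omega)$ for $f\in[0,1]^\Omega$, $g\in[-\infty,\infty)^\Omega$, with $a\cdot0=0\cdot a=0$ for all extended reals $a$; so $E_p g=\langle\hat p,g\rangle$ where $E_pg=\sum_{p(\{\omega\})\ne0}p(\{\omega\})g(\omega)$. $s$ is proper if $\langle p,s(p)\rangle\ge\langle p,s(q)\rangle$ for all $p,q\in\hat{\mathcal P}$. A score is finite if all its values are finite. *)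

From HB Require Import structures.
From mathcomp Require Import all_boot all_order all_algebra.
From mathcomp Require Import all_classical all_reals all_analysis.
Set Implicit Arguments. Unset Strict Implicit. Unset Printing Implicit Defensive.
Import Order.TTheory GRing.Theory Num.Theory.
Import numFieldNormedType.Exports.
Local Open Scope classical_set_scope.
Local Open Scope ring_scope.

(* Points of \hat P are functions Omega -> R; the
   Euclidean topology on R^Omega (Omega finite) is the product topology
   {ptws Omega -> R}. *)

Definition simplex (R : realType) (Omega : finType) : set (Omega -> R) :=
  [set q | (forall w, 0 <= q w <= 1) /\ \sum_(w : Omega) q w = 1].

(* <f, g> = sum_w f(w) * g(w), with 0 * (-oo) = 0 (MathComp's ereal convention) *)
Definition dotE (R : realType) (Omega : finType) (f : Omega -> R)
  (g : Omega -> \bar R) : \bar R :=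
  (\sum_(w : Omega) ((f w)%:E * g w))%E.

Definition proper_score (R : realType) (Omega : finType)
  (s : (Omega -> R) -> (Omega -> \bar R)) : Prop :=
  forall p q, simplex p -> simplex q -> (dotE p (s q) <= dotE p (s p))%E.

Definition finH (R : realType) (Omega : finType)
  (s : (Omega -> R) -> (Omega -> \bar R)) :
  set (@prod_topology Omega (fun=> numFieldTopology.Real_sort__canonical__topology_structure_Topological R)) :=
  [set p : {ptws Omega -> R} | simplex (p : Omega -> R) /\ forall w, s p w \is a fin_num].

From HB Require Import structures.
From mathcomp Require Import all_boot all_order all_algebra.
From mathcomp Require Import all_classical all_reals all_analysis.
From mathcomp Require Import lra ring.
Import Order.TTheory GRing.Theory Num.Theory.
Import numFieldNormedType.Exports.
Local Open Scope classical_set_scope.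
Local Open Scope ring_scope.
Set Implicit Arguments. Unset Strict Implicit. Unset Printing Implicit Defensive.

(* Let C be the set of the finite score vectors s(q), q in H, and let
   g(p) = sup_{c in C} <p, c> be its support function.  Propriety says exactly
   that g(q) = <q, s(q)> on H.  As a supremum of linear forms g is lower
   semicontinuous; since every c in C is bounded by M and every q close to p
   dominates (1 - t) p, we also have g(q) <= (1 - t) g(p) + t M near p, so g is
   continuous on the simplex and the limit in the first two claims is g(p).
   For the third one, a_n = <p, s(p_n)> tends to <p, r>; it is at most g(p)
   while g(p_n) <= (1 - t) a_n + t M, so a_n tends to g(p) as well. *)

Lemma cvge_sum (R : realFieldType) (T I : Type) (F : set_system T) {FF : Filter F}
    (r : seq I) (f : I -> T -> \bar R) (l : I -> \bar R) :
  (forall i, l i != +oo%E) -> (forall i, f i @ F --> l i) ->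
  (\sum_(i <- r) f i x)%E @[x --> F] --> (\sum_(i <- r) l i)%E.
Proof.
move=> lNy fl; elim: r => [|i r IHr].
  rewrite big_nil; under eq_fun do rewrite big_nil; exact: cvg_cst.
rewrite big_cons; under eq_fun do rewrite big_cons.
have sumNy : (\sum_(j <- r) l j != +oo)%E.
  by elim/big_ind: _ => // x y; move: x y => [x| |] [y| |].
by apply: cvgeD (fl i) IHr; rewrite /adde_def (negbTE (lNy i)) (negbTE sumNy) !andbF.
Qed.

(* [proj_continuous] with the projection eta-expanded and the index explicit,
   so that it applies to goals about [fun f => f i]. *)
Lemma coord_continuous (I : eqType) (K : topologicalType) (i : I) :
  continuous (fun f : {ptws I -> K} => f i).
Proof. exact: proj_continuous. Qed.
Arguments coord_continuous {I K} i.

Lemma cvg_within_near (T : Type) (U : topologicalType) (F : set_system T)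
    {FF : Filter F} (A : set U) (u : T -> U) (x : U) :
  (\forall t \near F, A (u t)) -> u @ F --> x -> u @ F --> within A (nbhs x).
Proof. by move=> Au ux P /ux; apply: filterS2 Au => t Aut /(_ Aut). Qed.

Lemma cvg_mix_squeeze (R : realFieldType) (T : Type) (F : set_system T)
    {FF : Filter F} (a b : T -> R) (L M : R) :
  (forall x, a x <= L) -> b @ F --> L ->
  (forall t, 0 < t -> \forall x \near F, b x <= (1 - t) * a x + t * M) ->
  a @ F --> L.
Proof.
move=> aL bL abM; apply/cvgrPdist_le => e e0.
set A := `|M - L|; have A0 : 0 <= A := normr_ge0 _.
set t := e / (4 * A + 2 * e + 4).
have t0 : 0 < t by rewrite divr_gt0 //; lra.
have t2 : t <= 1 / 2 by rewrite ler_pdivrMr; lra.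
have tA : t * A <= e / 4 by rewrite mulrAC ler_pdivrMr; [nra | lra].
have tMA : t * (M - L) <= t * A by apply: ler_wpM2l; [exact: ltW | exact: ler_norm].
have e40 : 0 < e / 4 by lra.
near=> x.
have Lb : `|L - b x| <= e / 4 by near: x; move/cvgrPdist_le : bL; apply.
have bM : b x <= (1 - t) * a x + t * M by near: x; exact: abM.
have aLx := aL x; clearbody t A; move: Lb; rewrite ler_norml => /andP[_ Lb].
rewrite ler_norml; apply/andP; split; first lra.
(* a x < L - e would make (1 - t) a x + t M smaller than L - e / 4 <= b x. *)
rewrite leNgt; apply/negP => ae.
have : (1 - t) * a x < (1 - t) * (L - e) by rewrite ltr_pM2l; lra.
have : t * e <= e / 2 by nra.
lra.
Unshelve. all: by end_near.
Qed.

Section Simplex.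
Context {R : realType} {Omega : finType}.

Definition dotR (p c : Omega -> R) : R := \sum_w p w * c w.

Lemma dotR_continuous c : continuous (fun q : {ptws Omega -> R} => dotR q c).
Proof.
apply: (@continuous_big _ _ +%R 0 predT) => [|w _ q].
  exact: (@add_continuous R^o).
exact: cvgM (coord_continuous w q) (cvg_cst _).
Qed.

Lemma dotE_cvg (T : Type) (F : set_system T) {FF : Filter F}
    (p : Omega -> R) (f : T -> Omega -> \bar R) (r : Omega -> \bar R) :
  (forall w, 0 <= p w) -> (forall w, r w != +oo%E) ->
  (forall w, f x w @[x --> F] --> r w) -> dotE p (f x) @[x --> F] --> dotE p r.
Proof.
move=> p0 rNy fr; apply: cvge_sum => w; last exact: cvgeZl.
move: (rNy w) (p0 w); case: (r w) => [x| |] // _.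
by rewrite le_eqVlt => /predU1P[<-|pw]; [rewrite mul0e | rewrite gt0_muleNy].
Qed.

Lemma closed_simplex : closed (@simplex R Omega : set {ptws Omega -> R}).
Proof.
have -> : @simplex R Omega =
    \bigcap_(w in setT) (fun q : {ptws Omega -> R} => q w) @^-1` `[0, 1]
    `&` (fun q : {ptws Omega -> R} => \sum_w q w) @^-1` [set 1].
  apply/seteqP; split => q /= [q01 q1]; split => // w.
  - by move=> _; rewrite /= in_itv; exact: q01.
  - by move: (q01 w I); rewrite /= in_itv.
apply: closedI; [apply: closed_bigI => w _|]; apply: preimage_closed.
- by move=> q _; exact: coord_continuous.
- exact: interval_closed.
- move=> q _; apply: (@continuous_big _ _ +%R 0 predT) => [|w _].
    exact: (@add_continuous R^o).
  exact: coord_continuous.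
- exact: closed_eq.
Qed.

Lemma dotR_le p c M : simplex p -> (forall w, c w <= M) -> dotR p c <= M.
Proof.
move=> [p01 p1] cM; rewrite -[leRHS]mul1r -p1 mulr_suml.
by apply: ler_sum => w _; apply: ler_wpM2l; [case/andP: (p01 w)|].
Qed.

Lemma dotR_le_mix p q c t M : simplex p -> simplex q ->
  (forall w, 0 < p w -> (1 - t) * p w <= q w) -> (forall w, c w <= M) ->
  dotR q c <= (1 - t) * dotR p c + t * M.
Proof.
move=> [p01 p1] [q01 q1] pq cM.
have qp w : 0 <= q w - (1 - t) * p w.
  have /andP[p0 _] := p01 w; have /andP[q0 _] := q01 w.
  have [pw0|pw0] := ltP 0 (p w); first by have := pq w pw0; lra.
  have -> : p w = 0 by apply/eqP; rewrite eq_le pw0 p0.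
  by rewrite mulr0 subr0.
have -> : dotR q c = (1 - t) * dotR p c + \sum_w (q w - (1 - t) * p w) * c w.
  by rewrite /dotR mulr_sumr -big_split; apply: eq_bigr => w _ /=; ring.
rewrite lerD2l; apply: le_trans (_ : \sum_w (q w - (1 - t) * p w) * M <= _).
  by apply: ler_sum => w _; exact: ler_wpM2l.
by rewrite -mulr_suml sumrB -mulr_sumr q1 p1 mulr1 subKr.
Qed.

Lemma near_dominates (p : {ptws Omega -> R}) t : 0 < t ->
  \forall q \near p, forall w, 0 < p w -> (1 - t) * p w <= (q : Omega -> R) w.
Proof.
move=> t0; apply: (@filter_forall _ _ _ (nbhs p)) => w.
have [pw0|_] := ltP 0 (p w); last exact: nearW.
near=> q => _.
have : `|p w - q w| < t * p w.
  by near: q; apply: cvgr_dist_lt; [exact: coord_continuous | exact: mulr_gt0].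
by rewrite ltr_norml => /andP[_]; lra.
Unshelve. all: by end_near.
Qed.

End Simplex.

Section SupportFunction.
Context {R : realType} {Omega : finType}.
Variables (C : set (Omega -> R)) (M : R).
Hypotheses (C0 : C !=set0) (C_le : forall c, C c -> forall w, c w <= M).

Definition support_fun (p : Omega -> R) : R := sup [set dotR p c | c in C].

Lemma has_sup_support_fun p : simplex p -> has_sup [set dotR p c | c in C].
Proof.
move=> sp; split; first by have [c Cc] := C0; exists (dotR p c), c.
by exists M => _ [c Cc <-]; apply: dotR_le => //; exact: C_le.
Qed.

Lemma support_fun_ge p c : simplex p -> C c -> dotR p c <= support_fun p.
Proof. by move=> sp Cc; apply: (sup_upper_bound (has_sup_support_fun sp)); exists c. Qed.

Lemma support_fun_le p x : (forall c, C c -> dotR p c <= x) -> support_fun p <= x.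
Proof.
move=> px; apply: ge_sup => [|_ [c Cc <-]]; last exact: px.
by have [c Cc] := C0; exists (dotR p c), c.
Qed.

Lemma support_fun_le_mix p q t : simplex p -> simplex q -> t <= 1 ->
  (forall w, 0 < p w -> (1 - t) * p w <= q w) ->
  support_fun q <= (1 - t) * support_fun p + t * M.
Proof.
move=> sp sq t1 pq; apply: support_fun_le => c Cc.
apply: le_trans (dotR_le_mix sp sq pq (C_le Cc)) _.
by rewrite lerD2r ler_wpM2l ?subr_ge0 ?support_fun_ge.
Qed.

Lemma support_fun_cvg (p : {ptws Omega -> R}) : simplex p ->
  support_fun q @[q --> within (@simplex R Omega) (nbhs p)] --> support_fun p.
Proof.
move=> sp; apply/(cvgrPdist_le (FF := within_filter _ (nbhs_filter p))) => e e0.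
rewrite near_withinE.
have e20 : 0 < e / 2 by lra.
have [_ [c Cc <-]] := sup_adherent e20 (has_sup_support_fun sp).
rewrite -/(support_fun p) => pc.
set A := `|M - support_fun p|.
have A0 : 0 <= A := normr_ge0 _.
set t := e / (A + e + 1).
have t0 : 0 < t by rewrite divr_gt0 //; lra.
have t1 : t <= 1 by rewrite ler_pdivrMr; lra.
have tA : t * A <= e by rewrite mulrAC ler_pdivrMr; [nra | lra].
have tMA : t * (M - support_fun p) <= t * A.
  by apply: ler_wpM2l; [exact: ltW | exact: ler_norm].
near=> q => sq.
have up : support_fun q <= (1 - t) * support_fun p + t * M.
  by apply: support_fun_le_mix => //; near: q; exact: near_dominates.
have : `|dotR p c - dotR q c| < e / 2.
  by near: q; apply: cvgr_dist_lt => //; exact: dotR_continuous.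
have := support_fun_ge sq Cc.
clearbody t A; rewrite ler_norml ltr_norml => lo /andP[_ ?]; apply/andP; split; lra.
Unshelve. all: by end_near.
Qed.

End SupportFunction.

Section ProperScore.
Context {R : realType} {Omega : finType}.
Variables (M : R) (s : (Omega -> R) -> (Omega -> \bar R)).
Hypotheses (s_le : forall p, simplex p -> forall w, (s p w <= M%:E)%E)
  (s_proper : proper_score s).

Definition real_score q : Omega -> R := fun w => fine (s q w).

Definition finite_scores : set (Omega -> R) := [set real_score q | q in finH s].

Lemma dotE_real_score p q : (forall w, s q w \is a fin_num) ->
  dotE p (s q) = (dotR p (real_score q))%:E.
Proof.
by move=> sq; rewrite /dotE /dotR -sumEFin; apply: eq_bigr => w _; rewrite EFinM fineK.
Qed.

Lemma finite_scores_le c : finite_scores c -> forall w, c w <= M.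
Proof. by move=> [q [sq fq] <-] w; rewrite -lee_fin fineK //; exact: s_le. Qed.

Lemma finite_scores_neq0 p : closure (finH s) p -> finite_scores !=set0.
Proof. by move=> /(_ setT filterT) [q [Hq _]]; exists (real_score q), q. Qed.

Lemma closure_finH_simplex p : closure (finH s) p -> simplex p.
Proof. by move=> Hp; apply: closed_simplex; apply: closureS Hp => q []. Qed.

Lemma support_fun_finH q : finH s q ->
  support_fun finite_scores q = dotR q (real_score q).
Proof.
move=> Hq; have C0 : finite_scores !=set0 by exists (real_score q), q.
case: Hq => sq fq; apply/le_anti/andP; split.
  apply: (support_fun_le C0) => _ [q' [sq' fq'] <-].
  by rewrite -lee_fin -!dotE_real_score //; exact: s_proper.
by apply: (support_fun_ge C0 finite_scores_le sq); exists q.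
Qed.

Lemma expected_score_cvg (p : {ptws Omega -> R}) : closure (finH s) p ->
  (fun q : {ptws Omega -> R} => dotE q (s q)) @ within (finH s) (nbhs p)
    --> (support_fun finite_scores p)%:E.
Proof.
move=> Hp; have sp := closure_finH_simplex Hp; have C0 := finite_scores_neq0 Hp.
have score_eq : {near within (finH s) (nbhs p),
    (fun q => (support_fun finite_scores q)%:E) =1
    (fun q : {ptws Omega -> R} => dotE q (s q))}.
  rewrite near_withinE; apply: nearW => q [sq fq] /=.
  by rewrite dotE_real_score // support_fun_finH.
apply: cvg_trans (near_eq_cvg score_eq) _.
apply: cvg_EFin; first exact: nearW.
apply: cvg_trans (support_fun_cvg C0 finite_scores_le sp).
by apply: cvg_app; apply: within_subset => // q [].
Qed.

Lemma expected_score_seq_cvg (pn : nat -> {ptws Omega -> R})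
    (p : {ptws Omega -> R}) (r : {ptws Omega -> \bar R}) :
  (forall n, finH s (pn n)) -> pn @ \oo --> p -> closure (finH s) p ->
  (fun n => (s (pn n) : {ptws Omega -> \bar R})) @ \oo --> r ->
  (fun n => dotE (pn n) (s (pn n))) @ \oo --> dotE p r.
Proof.
move=> Hpn pnp Hp sr; have sp := closure_finH_simplex Hp.
have C0 := finite_scores_neq0 Hp; have Cpn n : finite_scores (real_score (pn n)).
  by exists (pn n).
set g := support_fun finite_scores.
have g_cvg : g (pn n) @[n --> \oo] --> g p.
  apply: cvg_comp (support_fun_cvg C0 finite_scores_le sp).
  by apply: (cvg_within_near _ pnp); apply: nearW => n; case: (Hpn n).
set a := fun n => dotR p (real_score (pn n)).
have a_cvg : a @ \oo --> g p.
  apply: (cvg_mix_squeeze _ g_cvg) => [n|t t0].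
    exact: (support_fun_ge C0 finite_scores_le sp (Cpn n)).
  near=> n; have [spn fpn] := Hpn n.
  rewrite /g support_fun_finH //; apply: dotR_le_mix => //.
    by near: n; exact: pnp _ (near_dominates p t0).
  exact: finite_scores_le (Cpn n).
have r_lim : (fun n => (a n)%:E) @ \oo --> dotE p r.
  have -> : (fun n => (a n)%:E) = (fun n => dotE p (s (pn n))).
    by apply: funext => n; rewrite dotE_real_score //; case: (Hpn n).
  have sr_w w : s (pn n) w @[n --> \oo] --> r w.
    exact: cvg_comp sr (coord_continuous w r).
  apply: (dotE_cvg _ _ sr_w) => w; first by case/andP: (sp.1 w).
  suff : (r w <= M%:E)%E by case: (r w).
  apply: cvge_le (sr_w w); apply: nearW => n; apply: s_le; exact: (Hpn n).1.
have -> : dotE p r = (g p)%:E.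
  apply: cvg_unique r_lim _; first exact: ereal_hausdorff.
  by apply: cvg_EFin => //; exact: nearW.
have -> : (fun n => dotE (pn n) (s (pn n))) = (fun n => (g (pn n))%:E).
  apply: funext => n; have [spn fpn] := Hpn n.
  by rewrite dotE_real_score // /g support_fun_finH.
by apply: cvg_EFin => //; exact: nearW.
Unshelve. all: by end_near.
Qed.

End ProperScore.

Theorem lemma3 (R : realType) (Omega : finType) (M : R)
  (s : (Omega -> R) -> (Omega -> \bar R)) :
  (forall p, simplex p -> forall w, (s p w <= M%:E)%E) ->
  proper_score s ->
  (forall p : {ptws Omega -> R}, closure (finH s) p ->
     exists l : \bar R,
       (fun q : {ptws Omega -> R} => dotE q (s q)) @ within (finH s) (nbhs p) --> l) /\
  (forall p : {ptws Omega -> R}, closure (finH s) p ->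
     (forall w, s p w \is a fin_num) ->
     (fun q : {ptws Omega -> R} => dotE q (s q)) @ within (finH s) (nbhs p)
       --> dotE p (s p)) /\
  (forall (pn : nat -> {ptws Omega -> R}) (p : {ptws Omega -> R})
          (r : {ptws Omega -> \bar R}),
     (forall n, finH s (pn n)) ->
     pn @ \oo --> p ->
     closure (finH s) p ->
     (fun n => (s (pn n) : {ptws Omega -> \bar R})) @ \oo --> r ->
     (fun n => dotE (pn n) (s (pn n))) @ \oo --> dotE p r).
Proof.
move=> s_le s_proper; split; [|split].
- move=> p Hp; exists (support_fun (finite_scores s) p)%:E.
  exact: (expected_score_cvg s_le s_proper Hp).
- move=> p Hp fp; have Hp' : finH s p by split=> //; exact: closure_finH_simplex Hp.
  rewrite dotE_real_score // -(support_fun_finH s_le s_proper Hp').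
  exact: (expected_score_cvg s_le s_proper Hp).
- exact: expected_score_seq_cvg s_le s_proper.
Qed.
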